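(* Let $H$ be a fractionally $k$-colored digraph on $n$ nodes, and let $\mathbb{L}(H)$ be the random $k$-colored digraph obtained from it. Then $d_\square(H,\mathbb{L}(H))\le \frac{10k}{\sqrt n}$ with probability at least $1-ke^{-n}$.
   Context: A fractionally $k$-colored digraph $H$ on node set $V$ assigns to every ordered pair $(i,j)$ of distinct nodes nonnegative weights $\beta^1_H(i,j),\dots,\beta^k_H(i,j)$ with $\sum_h\beta^h_H(i,j)=1$; a $k$-colored digraph (complete digraph with each ordered pair of distinct nodes colored by one of $1,\dots,k$) is the special case where $\beta^h$ is the indicator of color $h$. The random $k$-colored digraph $\mathbb{L}(H)$ on $V$ colors each pair with color $h$ with probability $\beta^h_H(i,j)$, independently for different pairs. For two fractionally $k$-colored digraphs $H,H'$ on the same node set $V$, $d_\square(H,H')=\frac{1}{|V|^2}\sum_{h=1}^k\max_{S,T\subseteq V}\Bigl|\sum_{i\in S, j\in T}(\beta^h_H(i,j)-\beta^h_{H'}(i,j))\Bigr|$. *)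

From HB Require Import structures.
From mathcomp Require Import all_boot all_order all_algebra.
From mathcomp Require Import all_classical all_reals.
From mathcomp.analysis Require Import sequences exp.

Set Implicit Arguments.
Unset Strict Implicit.
Unset Printing Implicit Defensive.

Import Order.TTheory GRing.Theory Num.Theory.
Local Open Scope ring_scope.

Definition offdiag (n : nat) := {p : 'I_n * 'I_n | p.1 != p.2}.

(* A weight assignment: beta i j h is beta^h(i,j) (node set 'I_n, colors 'I_k).
   Values on the diagonal i = j are irrelevant and never used. *)
Definition weights (R : realType) (n k : nat) := 'I_n -> 'I_n -> 'I_k -> R.

Definition frac_colored (R : realType) (n k : nat) (H : weights R n k) : Prop :=
  forall i j : 'I_n, i != j ->
    (forall h, 0 <= H i j h) /\ \sum_(h < k) H i j h = 1.

(* A k-colored digraph (coloring of the ordered pairs of distinct nodes)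
   seen as a fractionally k-colored digraph (indicator weights). *)
Definition colored_weights (R : realType) (n k : nat)
    (c : {ffun offdiag n -> 'I_k}) : weights R n k :=
  fun i j h =>
    match @insub _ (fun p : 'I_n * 'I_n => p.1 != p.2) (offdiag n) (i, j) with
    | Some p => ((c p == h)%:R : R)
    | None => 0
    end.

(* The cut distance d_square(H,H'). Sums over S x T range over pairs of
   distinct nodes (weights are only defined there). *)
Definition dcut (R : realType) (n k : nat) (H H' : weights R n k) : R :=
  (n%:R ^+ 2)^-1 *
  \sum_(h < k)
    \big[Num.max/0]_(S : {set 'I_n})
      \big[Num.max/0]_(T : {set 'I_n})
        `| \sum_(i in S) \sum_(j in T | i != j) (H i j h - H' i j h) |.

(* Distribution of the random k-colored digraph L(H): each pair (i,j) gets
   color h with probability H i j h, independently. Probability of an event. *)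
Definition probL (R : realType) (n k : nat) (H : weights R n k)
    (E : pred {ffun offdiag n -> 'I_k}) : R :=
  \sum_(c | E c) \prod_(p : offdiag n) H (val p).1 (val p).2 (c p).

From HB Require Import structures.
From mathcomp Require Import all_boot all_order all_algebra.
From mathcomp Require Import all_classical all_reals.
From mathcomp.analysis Require Import sequences exp.
From mathcomp Require Import ring lra.
Import Order.TTheory GRing.Theory Num.Theory.
Local Open Scope ring_scope.
Set Implicit Arguments. Unset Strict Implicit.

(* For a color h and node sets S, T, the cut deviation
   sum_(i in S, j in T) (beta^h(i,j) - [c(i,j) = h]) of the random coloring c
   is a sum of independent centered variables with values in [-1, 1], so its
   exponential moment at |l| <= 1/2 is at most exp(2 l^2 n^2).  Chernoff's
   bound with l = 1/(2 sqrt n) shows that the deviation exceeds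
   t = 10 n sqrt n in absolute value with probability at most 2 exp(-9n/2);
   a union bound over the k 4^n triples (h, S, T) leaves a failure
   probability of at most 2 k 4^n exp(-9n/2) <= k exp(-n).  Outside these
   events d_cut(H, L(H)) <= k t / n^2 = 10 k / sqrt n. *)

Lemma expR_ge1 (R : realType) (x : R) : 0 <= x -> 1 <= expR x.
Proof. by move=> x_ge0; rewrite leNgt expR_lt1 -leNgt. Qed.

Lemma expR_le_1DxDsqr (R : realType) (x : R) :
  x <= 1/2 -> expR x <= 1 + x + 2 * x ^+ 2.
Proof.
move=> x_le.
have ex_gt0 := expR_gt0 x.
have : (1 - x) * expR x <= 1.
  by rewrite -[leRHS](mulVf (lt0r_neq0 ex_gt0)) ler_pM2r // -expRN expR_ge1Dx.
(* (1 + x + 2 x^2) (1 - x) = 1 + x^2 (1 - 2 x) >= 1 *)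
nra.
Qed.

Lemma mgf_centered_indicator_le (R : realType) k (w : 'I_k -> R) (h : 'I_k) (l : R) :
  (forall x, 0 <= w x) -> \sum_x w x = 1 -> `|l| <= 1/2 ->
  \sum_x w x * expR (l * (w h - (x == h)%:R)) <= expR (2 * l ^+ 2).
Proof.
move=> w_ge0 w_sum1 /[dup] l_le; rewrite ler_norml => /andP[lN lP].
have wh_le1 : w h <= 1 by rewrite -w_sum1 (bigD1 h) //= lerDl sumr_ge0.
have wh_ge0 := w_ge0 h.
apply: (@le_trans _ _ (\sum_x w x * (1 + 2 * l ^+ 2 + l * (w h - (x == h)%:R)))).
  apply: ler_sum => x _; apply: ler_wpM2l => //.
  set d := w h - (x == h)%:R.
  have d_bd : -1 <= d <= 1 by rewrite /d; case: (x == h) => /=; lra.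
  have ld_le : l * d <= 1/2 by nra.
  apply: (le_trans (expR_le_1DxDsqr ld_le)).
  have d_sq : d ^+ 2 <= 1 by nra.
  have : (l * d) ^+ 2 <= l ^+ 2 by rewrite exprMn ler_piMr ?sqr_ge0.
  lra.
(* the linear terms cancel: the indicator of h has mean w h *)
under eq_bigr do rewrite mulrDr mulrBr !mulrDr mulr1.
rewrite !big_split /= -!mulr_suml w_sum1 (bigD1 h) //= eqxx big1 => [|x /negbTE->];
  last by rewrite mulr0 oppr0 mulr0.
rewrite addr0 mulr1 mulrN [w h * l]mulrC !mul1r subrr addr0.
exact: expR_ge1Dx.
Qed.

Section FiniteProbability.
Variables (R : realType) (T : finType) (mu : T -> R).
Hypothesis mu_ge0 : forall c, 0 <= mu c.

Definition prob (E : pred T) : R := \sum_(c | E c) mu c.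

Definition expect (X : T -> R) : R := \sum_c mu c * X c.

Lemma eq_expect (X Y : T -> R) : X =1 Y -> expect X = expect Y.
Proof. by move=> XY; apply: eq_bigr => c _; rewrite XY. Qed.

Lemma probC (E : pred T) : \sum_c mu c = 1 -> prob (predC E) = 1 - prob E.
Proof. by move=> <-; rewrite /prob (bigID E predT) /= addrC addrK. Qed.

Lemma prob_le_sum_cover (I : finType) (E : pred T) (B : I -> pred T) :
  (forall c, E c -> exists i, B i c) -> prob E <= \sum_i prob (B i).
Proof.
move=> cover; rewrite [prob E]big_mkcond.
apply: (@le_trans _ _ (\sum_c \sum_(i | B i c) mu c)).
  apply: ler_sum => c _; case: ifP => [/cover[i Bi]|_]; last exact: sumr_ge0.
  by rewrite (bigD1 i) //= lerDl sumr_ge0.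
by rewrite (exchange_big_dep xpredT).
Qed.

Lemma prob_norm_gt_le (X : T -> R) (t l : R) : 0 <= l ->
  prob [pred c | t < `|X c|] <=
  expR (- (l * t)) * (expect (fun c => expR (l * X c)) +
                      expect (fun c => expR (- l * X c))).
Proof.
move=> l_ge0; rewrite /prob /expect -big_split mulr_sumr big_mkcond /=.
apply: ler_sum => c _; rewrite -mulrDr mulrCA.
case: ifP => [tX|_]; last by rewrite !mulr_ge0 ?addr_ge0 ?expR_ge0.
rewrite ler_peMr // mulrDr -!expRD.
move: tX; rewrite ltr_normr => /orP[] tX.
  by rewrite -[leLHS]addr0 lerD ?expR_ge0 // expR_ge1 //; nra.
by rewrite -[leLHS]add0r lerD ?expR_ge0 // expR_ge1 //; nra.
Qed.

End FiniteProbability.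

Section ProductMass.
Variables (R : realType) (D : finType) (k : nat) (w : D -> 'I_k -> R).

Definition prodmass (c : {ffun D -> 'I_k}) : R := \prod_p w p (c p).

Lemma prodmass_ge0 : (forall p x, 0 <= w p x) -> forall c, 0 <= prodmass c.
Proof. by move=> w_ge0 c; apply: prodr_ge0. Qed.

Lemma expect_prodmass_prod (g : D -> 'I_k -> R) :
  expect prodmass (fun c => \prod_p g p (c p)) = \prod_p \sum_x w p x * g p x.
Proof. by rewrite bigA_distr_bigA; apply: eq_bigr => c _; rewrite -big_split. Qed.

Lemma prodmass_sum1 : (forall p, \sum_x w p x = 1) -> \sum_c prodmass c = 1.
Proof. by move=> w_sum1; rewrite -(bigA_distr_bigA w) big1. Qed.

End ProductMass.

Section CutDeviation.
Variables (R : realType) (n k : nat).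
Implicit Types (H : weights R n k) (h : 'I_k) (S T : {set 'I_n}).

Definition offdiag_weights H (p : offdiag n) : 'I_k -> R := H (val p).1 (val p).2.

Lemma offdiag_weights_ge0 H : frac_colored H -> forall p x, 0 <= offdiag_weights H p x.
Proof. by move=> HF [[i j] /= ij] x; case: (HF i j ij) => + _; apply. Qed.

Lemma offdiag_weights_sum1 H : frac_colored H ->
  forall p, \sum_x offdiag_weights H p x = 1.
Proof. by move=> HF [[i j] /= ij]; case: (HF i j ij). Qed.

Definition cut_dev (H H' : weights R n k) h S T : R :=
  \sum_(i in S) \sum_(j in T | i != j) (H i j h - H' i j h).

Lemma dcut_le (H H' : weights R n k) (t : R) :
  (forall h S T, `|cut_dev H H' h S T| <= t) -> dcut H H' <= k%:R * t / n%:R ^+ 2.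
Proof.
move=> dev_le; rewrite /dcut [_ / _]mulrC ler_wpM2l ?invr_ge0 ?exprn_ge0 //.
apply: (@le_trans _ _ (\sum_(h < k) t)); last by rewrite sumr_const card_ord mulr_natl.
apply: ler_sum => h _.
have t_ge0 : 0 <= t := le_trans (normr_ge0 _) (dev_le h finset.set0 finset.set0).
by apply: bigmax_le => // S _; apply: bigmax_le => // T _; apply: dev_le.
Qed.

Lemma cut_dev_colored H (c : {ffun offdiag n -> 'I_k}) h S T :
  cut_dev H (colored_weights R c) h S T =
  \sum_p (if ((val p).1 \in S) && ((val p).2 \in T)
          then offdiag_weights H p h - (c p == h)%:R else 0).
Proof.
pose G (x : 'I_n * 'I_n) := if (x.1 \in S) && (x.2 \in T)
  then H x.1 x.2 h - colored_weights R c x.1 x.2 h else 0.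
transitivity (\sum_(p : offdiag n) G (val p)); last first.
  apply: eq_bigr => p _; rewrite /G; case: ifP => // _.
  by rewrite /colored_weights -surjective_pairing valK.
rewrite -(big_sub [pred x : 'I_n * 'I_n | x.1 != x.2] G) /cut_dev pair_big_dep /=.
rewrite [RHS]big_mkcond [LHS]big_mkcond; apply: eq_bigr => -[i j] _ /=.
by rewrite /G inE /=; case: (i \in S); case: (j \in T); case: (i != j).
Qed.

Lemma mgf_cut_dev_le H h S T (l : R) :
  frac_colored H -> `|l| <= 1/2 ->
  expect (prodmass (offdiag_weights H))
    (fun c => expR (l * cut_dev H (colored_weights R c) h S T))
  <= expR (2 * l ^+ 2 * n%:R ^+ 2).
Proof.
move=> HF l_le.
have w_ge0 := offdiag_weights_ge0 HF; have w_sum1 := offdiag_weights_sum1 HF.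
pose g p x := if ((val p).1 \in S) && ((val p).2 \in T)
  then expR (l * (offdiag_weights H p h - (x == h)%:R)) else 1.
rewrite (@eq_expect _ _ _ _ (fun c : {ffun offdiag n -> 'I_k} => \prod_p g p (c p)))
  => [|c]; last first.
  rewrite cut_dev_colored mulr_sumr expR_sum.
  by apply: eq_bigr => p _; rewrite /g; case: ifP; rewrite ?mulr0 ?expR0.
have g_ge0 p x : 0 <= g p x by rewrite /g; case: ifP; rewrite ?expR_ge0.
have g_mean_le p : \sum_x offdiag_weights H p x * g p x <= expR (2 * l ^+ 2).
  rewrite /g; case: (_ && _); first exact: mgf_centered_indicator_le.
  by under eq_bigr do rewrite mulr1; rewrite w_sum1 expR_ge1 // mulr_ge0 ?sqr_ge0.
have card_offdiag : (#|{: offdiag n}| <= n ^ 2)%N.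
  by rewrite card_sig (leq_trans (max_card _)) // card_prod card_ord.
rewrite expect_prodmass_prod.
apply: (@le_trans _ _ (\prod_(p : offdiag n) expR (2 * l ^+ 2))).
  by apply: ler_prod => p _; rewrite g_mean_le andbT sumr_ge0 // => x _; rewrite mulr_ge0.
rewrite prodr_const -expRM_natl ler_expR [leRHS]mulrC.
by rewrite ler_wpM2r ?(mulr_ge0 _ (sqr_ge0 l)) // -natrX ler_nat.
Qed.

End CutDeviation.

Lemma dcut_le_of_cut_dev (R : realType) n k (H H' : weights R n k) :
  (0 < n)%N ->
  (forall h S T, `|cut_dev H H' h S T| <= 10 * n%:R * Num.sqrt n%:R) ->
  dcut H H' <= 10 * k%:R / Num.sqrt n%:R.
Proof.
move=> n_gt0 /dcut_le /le_trans; apply.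
set s := Num.sqrt (n%:R : R).
have s_neq0 : s != 0 by rewrite sqrtr_eq0 -ltNge ltr0n.
have s_sq : s ^+ 2 = n%:R by rewrite sqr_sqrtr ?ler0n.
by rewrite (_ : _ / _ = 10 * k%:R / s) // -s_sq; field.
Qed.

Lemma prob_cut_dev_gt_le (R : realType) n k (H : weights R n k) h S T :
  frac_colored H -> (0 < n)%N ->
  prob (prodmass (offdiag_weights H))
    [pred c | 10 * n%:R * Num.sqrt n%:R < `|cut_dev H (colored_weights R c) h S T|]
  <= 2 * expR (- (9/2 * n%:R)).
Proof.
move=> HF n_gt0.
set s := Num.sqrt (n%:R : R).
have s_gt0 : 0 < s by rewrite sqrtr_gt0 ltr0n.
have s_neq0 : s != 0 := lt0r_neq0 s_gt0.
have s_sq : s ^+ 2 = n%:R by rewrite sqr_sqrtr ?ler0n.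
have s_ge1 : 1 <= s by rewrite /s -[leLHS]sqrtr1 ler_sqrt // ler1n.
set l := (2 * s)^-1.
have l_gt0 : 0 < l by rewrite invr_gt0 mulr_gt0.
have l_2s : l * (2 * s) = 1 by rewrite mulVf // lt0r_neq0 // mulr_gt0.
have l_le : `|l| <= 1/2 by rewrite gtr0_norm //; nra.
have mu_ge0 := prodmass_ge0 (offdiag_weights_ge0 HF).
apply: le_trans (prob_norm_gt_le mu_ge0 _ _ (ltW l_gt0)) _.
have lt_eq : l * (10 * n%:R * s) = 5 * n%:R by rewrite /l; field.
have l2n_eq : 2 * l ^+ 2 * n%:R ^+ 2 = n%:R / 2 by rewrite -s_sq /l; field.
have lN_le : `|- l| <= 1/2 by rewrite normrN.
apply: le_trans (ler_wpM2l (expR_ge0 _)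
  (lerD (mgf_cut_dev_le h S T HF l_le) (mgf_cut_dev_le h S T HF lN_le))) _.
rewrite sqrrN lt_eq l2n_eq mulrDr -expRD.
have -> : - (5 * n%:R) + n%:R / 2 = - (9/2 * n%:R) :> R by field.
lra.
Qed.

Lemma expn4_mul_expR_le (R : realType) n :
  (0 < n)%N -> 4 ^+ n * (2 * expR (- (9/2 * n%:R))) <= expR (- n%:R) :> R.
Proof.
move=> n_gt0.
have e8 : 8 <= expR (7/2 : R).
  have := @expR_ge1Dxn R (7/2) 2 ltac:(lra).
  by rewrite (_ : 3`! = 6)%N // !exprS expr0; lra.
have -> : - n%:R = 7/2 * n%:R - 9/2 * n%:R :> R by field.
rewrite expRD mulrCA mulrA ler_wpM2r ?expR_ge0 // mulrC expRM_natr.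
apply: le_trans (lerXn2r n _ _ e8); rewrite ?nnegrE ?ler0n ?expR_ge0 //.
rewrite -[8]/((2 * 4)%:R : R) natrM exprMn [leRHS]mulrC ler_wpM2l ?exprn_ge0 //.
case: n n_gt0 => // m _; rewrite exprS; apply: ler_peMr => //; apply: exprn_ege1; lra.
Qed.

Theorem lemma1 (R : realType) (n k : nat) (H : weights R n k) :
  frac_colored H ->
  1 - k%:R * expR (- n%:R) <=
  probL H (fun c => dcut H (colored_weights R c) <= 10 * k%:R / Num.sqrt n%:R).
Proof.
move=> HF; set E := (fun c => _).
set mu := prodmass (offdiag_weights H).
have mu_ge0 := prodmass_ge0 (offdiag_weights_ge0 HF).
have mu_sum1 : \sum_c mu c = 1 := prodmass_sum1 (offdiag_weights_sum1 HF).
change (1 - k%:R * expR (- n%:R) <= prob mu E).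
rewrite -[prob mu E](subKr 1) -probC // lerD2l lerN2.
have [n0 | n_gt0] := posnP n.
  (* both (n%:R ^+ 2)^-1 in dcut and the bound 10 k / sqrt 0 are 0 *)
  rewrite /prob big_pred0 ?mulr_ge0 ?expR_ge0 // => c /=.
  have nR0 : n%:R = 0 :> R by rewrite n0.
  by rewrite /E /dcut nR0 expr0n invr0 mul0r sqrtr0 invr0 mulr0 lexx.
pose B (i : 'I_k * {set 'I_n} * {set 'I_n}) := [pred c |
  10 * n%:R * Num.sqrt n%:R < `|cut_dev H (colored_weights R c) i.1.1 i.1.2 i.2|].
apply: le_trans (prob_le_sum_cover mu_ge0 (B := B) _) _.
  move=> c /= Ec; apply/existsP; move: Ec; apply: contraNT => /existsPn dev_le.
  by apply: dcut_le_of_cut_dev => // h S T; rewrite leNgt; apply: dev_le (h, S, T).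
apply: le_trans (ler_sum _ (fun i _ => prob_cut_dev_gt_le i.1.1 i.1.2 i.2 HF n_gt0)) _.
rewrite sumr_const !card_prod card_ord -cardsT -powersetT card_powerset cardsT card_ord.
rewrite -[leLHS]mulr_natl -mulnA natrM -mulrA ler_wpM2l ?ler0n //.
by rewrite -expnMn natrX expn4_mul_expR_le.
Qed.
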